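(* Let $m,n\ge 6$ be integers. Then $$\max\{\gamma_2^d(C_{m-1}\Box C_n),\ \gamma_2^d(C_m\Box C_{n-1})\}\le \gamma_2^d(C_m\Box C_n).$$
   Context: $C_k$ denotes the cycle on $k$ vertices, and $G\Box H$ is the Cartesian product: vertex set $V(G)\times V(H)$, with $(g,h)\sim(g',h')$ iff either $g=g'$ and $hh'\in E(H)$, or $h=h'$ and $gg'\in E(G)$. For a simple graph $\Gamma$ and a vertex $v$, let $\Gamma(v)$ be the set of vertices at distance $1$ from $v$ and $\Gamma_2(v)$ the set of vertices at distance exactly $2$ from $v$. A set $S\subseteq V(\Gamma)$ is a disjunctive dominating set if every vertex $v\notin S$ satisfies $|\Gamma(v)\cap S|\ge 1$ or $|\Gamma_2(v)\cap S|\ge 2$. The disjunctive domination number $\gamma_2^d(\Gamma)$ is the minimum cardinality of a disjunctive dominating set of $\Gamma$. *)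

From mathcomp Require Import all_boot.
Set Implicit Arguments. Unset Strict Implicit. Unset Printing Implicit Defensive.

(* A simple graph: vertex finType T with symmetric irreflexive adjacency e. *)

Definition nbhd (T : finType) (e : rel T) (v : T) : {set T} :=
  [set u | (u != v) && e v u].

Definition nbhd2 (T : finType) (e : rel T) (v : T) : {set T} :=
  [set u | [&& u != v, ~~ e v u & [exists w, e v w && e w u]]].

Definition disj_dom (T : finType) (e : rel T) (S : {set T}) : bool :=
  [forall v, (v \notin S) ==>
     ((0 < #|nbhd e v :&: S|) || (2 <= #|nbhd2 e v :&: S|))].

(* Disjunctive domination number (setT is always disjunctive dominating). *)
Definition ddom_num (T : finType) (e : rel T) : nat :=
  #|[arg min_(S < [set: T] | disj_dom e S) #|S|]|.

(* Cycle C_k on 'I_k (k >= 3): i ~ j iff j = i+1 mod k or i = j+1 mod k. *)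
Definition cycle_adj (k : nat) : rel 'I_k :=
  fun i j => (j == (i.+1 %% k) :> nat) || (i == (j.+1 %% k) :> nat).

Definition cart_adj (A B : finType) (eA : rel A) (eB : rel B) : rel (A * B) :=
  fun x y => ((x.1 == y.1) && eB x.2 y.2) || ((x.2 == y.2) && eA x.1 y.1).

Arguments cycle_adj : clear implicits.
Definition torus_adj (m n : nat) : rel ('I_m * 'I_n) :=
  cart_adj (cycle_adj m) (cycle_adj n).

Arguments torus_adj : clear implicits.
Definition gamma2d_torus (m n : nat) : nat := ddom_num (torus_adj m n).

From mathcomp Require Import all_boot zify.
From Stdlib Require Import ZArith.
Set Implicit Arguments. Unset Strict Implicit. Unset Printing Implicit Defensive.

(* Merging two adjacent rows of C_m [] C_n gives a surjection onto
   C_(m-1) [] C_n under which every edge is either preserved or collapsed to a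
   point, and only adjacent vertices are identified.  The image of a
   disjunctive dominating set S is then disjunctive dominating: a neighbour of
   v in S maps to a neighbour of the image of v, and a vertex of S at distance
   two maps to a vertex at distance at most two.  Two vertices at distance two
   from v are never identified: they would be adjacent, closing a walk of
   length 5 through v, and the torus has no closed walk of length 5 when
   m, n >= 6 (along each cycle the steps must cancel, so both coordinates
   take an even number of steps). *)

Section DisjunctiveDominationNumber.
Variables (T : finType) (e : rel T).

Lemma disj_domT : disj_dom e [set: T].
Proof. by apply/forallP => v; rewrite in_setT. Qed.

Lemma ddom_num_witness : exists2 S, disj_dom e S & #|S| = ddom_num e.
Proof. by rewrite /ddom_num; case: (arg_minnP _ disj_domT) => S domS _; exists S. Qed.

Lemma ddom_num_min S : disj_dom e S -> ddom_num e <= #|S|.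
Proof. by rewrite /ddom_num; case: (arg_minnP _ disj_domT) => S0 _; apply. Qed.

End DisjunctiveDominationNumber.

Section DisjDomImage.
Variables (T T' : finType) (e : rel T) (e' : rel T') (f : T -> T').
Hypothesis f_surj : forall y, exists x, f x = y.
Hypothesis f_edge : forall x y, e x y -> f x = f y \/ e' (f x) (f y).
Hypothesis f_inj_nbhd2 : forall v, {in nbhd2 e v &, injective f}.

Lemma disj_dom_imset S : disj_dom e S -> disj_dom e' (f @: S).
Proof.
move=> domS; apply/forallP => v'; apply/implyP => v'NfS.
have [v fv] := f_surj v'.
have vNS : v \notin S by apply: contra v'NfS => vS; rewrite -fv imset_f.
have fs_neq s : s \in S -> f s != v' by move=> sS; apply: contraNneq v'NfS => <-; rewrite imset_f.
have [|/exists_inPn nadj] := boolP [exists s in S, e' v' (f s)].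
  case/exists_inP => s sS adj; apply/orP; left.
  by apply/card_gt0P; exists (f s); rewrite !inE fs_neq // adj imset_f.
have nbhdNS s : s \in nbhd e v -> s \notin S.
  rewrite inE => /andP[_ vs]; apply/negP => sS.
  case: (f_edge vs) => [fvs | adj]; last by move: (nadj s sS); rewrite -fv adj.
  by move: (fs_neq s sS); rewrite -fvs fv eqxx.
have nbhd2_img s : s \in S -> s \in nbhd2 e v -> f s \in nbhd2 e' v'.
  move=> sS; rewrite !inE => /and3P[_ _ /existsP[w /andP[vw ws]]].
  rewrite fs_neq // nadj //=; apply/existsP; exists (f w); rewrite -fv.
  case: (f_edge vw) => [fvw | adj_vw]; case: (f_edge ws) => [fws | adj_ws].
  - by move: (fs_neq s sS); rewrite -fws -fvw fv eqxx.
  - by move: (nadj s sS); rewrite -fv fvw adj_ws.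
  - by move: (nadj s sS); rewrite -fv -fws adj_vw.
  - by rewrite adj_vw adj_ws.
have := forallP domS v; rewrite vNS /= => /orP[|].
  by case/card_gt0P => s; rewrite in_setI => /andP[/nbhdNS/negP].
case/card_gt1P => s1 [s2 []]; rewrite !in_setI => /andP[vs1 s1S] /andP[vs2 s2S] s12.
apply/orP; right; apply/card_gt1P; exists (f s1), (f s2).
rewrite !in_setI !imset_f // !nbhd2_img //; split=> //.
by apply: contra s12 => /eqP/(f_inj_nbhd2 vs1 vs2) ->.
Qed.

End DisjDomImage.

Definition contraction (T T' : finType) (e : rel T) (e' : rel T') (f : T -> T') :=
  [/\ forall y, exists x, f x = y,
      forall x y, e x y -> f x = f y \/ e' (f x) (f y)
    & forall x y, x != y -> f x = f y -> e x y].

Lemma ddom_num_contraction (T T' : finType) (e : rel T) (e' : rel T') (f : T -> T') :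
  contraction e e' f -> (forall v, {in nbhd2 e v &, forall x y, ~~ e x y}) ->
  ddom_num e' <= ddom_num e.
Proof.
case=> f_surj f_edge f_merge nbhd2_indep.
have f_inj v : {in nbhd2 e v &, injective f}.
  move=> x y xv yv fxy; apply/eqP; apply: contraTT (nbhd2_indep v x y xv yv) => xy.
  by rewrite negbK (f_merge _ _ xy fxy).
have [S domS <-] := ddom_num_witness e.
exact: leq_trans (ddom_num_min (disj_dom_imset f_surj f_edge f_inj domS)) (leq_imset_card f S).
Qed.

Lemma contraction_cart_l (A A' B : finType) (eA : rel A) (eA' : rel A') (eB : rel B)
    (f : A -> A') :
  contraction eA eA' f ->
  contraction (cart_adj eA eB) (cart_adj eA' eB) (fun x => (f x.1, x.2)).
Proof.
case=> f_surj f_edge f_merge; split.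
- by move=> [a' b]; have [a <-] := f_surj a'; exists (a, b).
- move=> [a b] [c d]; rewrite /cart_adj /= => /orP[/andP[/eqP <- bd] | /andP[/eqP <- ac]].
    by right; rewrite eqxx bd.
  by case: (f_edge _ _ ac) => [-> | fac]; [left | right; rewrite eqxx fac orbT].
- move=> [a b] [c d] neq [fac /= bd]; rewrite /cart_adj /= bd eqxx; apply/orP; right.
  by apply: f_merge fac; apply: contraNneq neq => ->; rewrite bd.
Qed.

Lemma contraction_cart_r (A B B' : finType) (eA : rel A) (eB : rel B) (eB' : rel B')
    (f : B -> B') :
  contraction eB eB' f ->
  contraction (cart_adj eA eB) (cart_adj eA eB') (fun x => (x.1, f x.2)).
Proof.
case=> f_surj f_edge f_merge; split.
- by move=> [a b']; have [b <-] := f_surj b'; exists (a, b).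
- move=> [a b] [c d]; rewrite /cart_adj /= => /orP[/andP[/eqP <- bd] | /andP[/eqP <- ac]].
    by case: (f_edge _ _ bd) => [-> | fbd]; [left | right; rewrite eqxx fbd].
  by right; rewrite eqxx ac orbT.
- move=> [a b] [c d] neq [/= ac fbd]; rewrite /cart_adj /= ac eqxx; apply/orP; left.
  by apply: f_merge fbd; apply: contraNneq neq => ->; rewrite ac.
Qed.

Lemma cycle_adjP k (i j : 'I_k) :
  reflect (j = i.+1 :> nat \/ i = j.+1 :> nat \/
           (i.+1 = k /\ j = 0 :> nat) \/ (j.+1 = k /\ i = 0 :> nat))
          (cycle_adj k i j).
Proof.
have succ_mod (x : 'I_k) : x.+1 %% k = if x.+1 == k then 0 else x.+1.
  by case: eqP => [-> | neq]; [exact: modnn | apply: modn_small; have := ltn_ord x; lia].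
rewrite /cycle_adj !succ_mod; move: (ltn_ord i) (ltn_ord j) => ilt jlt.
by case: ifP => [/eqP ? | /negbT/eqP ?]; case: ifP => [/eqP ? | /negbT/eqP ?];
  apply: (iffP idP); lia.
Qed.

Definition merge_last k (i : 'I_k.+2) : 'I_k.+1 := inord (minn i k).

Lemma merge_lastE k (i : 'I_k.+2) : merge_last i = minn i k :> nat.
Proof. by rewrite inordK // ltnS geq_minr. Qed.

Lemma cycle_contraction k :
  contraction (cycle_adj k.+2) (cycle_adj k.+1) (@merge_last k).
Proof.
split.
- move=> j; exists (widen_ord (leqnSn _) j); apply: ord_inj.
  by rewrite merge_lastE /=; have := ltn_ord j; lia.
- move=> x y /cycle_adjP xy; move: (ltn_ord x) (ltn_ord y) => xlt ylt.
  have [eq_m | neq_m] := eqVneq (minn x k) (minn y k).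
    by left; apply: ord_inj; rewrite !merge_lastE.
  by right; apply/cycle_adjP; rewrite !merge_lastE; lia.
- move=> x y xy /(congr1 (@nat_of_ord _)); rewrite !merge_lastE => eq_m.
  have {}xy : x != y :> nat := xy.
  by apply/cycle_adjP; move: (ltn_ord x) (ltn_ord y); lia.
Qed.

Lemma cycle_adj_sym k : symmetric (cycle_adj k).
Proof. by move=> i j; rewrite /cycle_adj orbC. Qed.

Lemma torus_adj_sym m n : symmetric (torus_adj m n).
Proof.
by move=> x y; rewrite /torus_adj /cart_adj (eq_sym x.1) (eq_sym x.2) !(cycle_adj_sym _ x.1)
  !(cycle_adj_sym _ x.2).
Qed.

Lemma multiple_small_eq0 (k : nat) (d u : Z) :
  (Z.abs u < Z.of_nat k)%Z -> (Z.of_nat k * d = u)%Z -> d = 0%Z.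
Proof. nia. Qed.

Lemma cycle_adj_step k (i j : 'I_k) : cycle_adj k i j ->
  exists s d : Z, (Z.of_nat j - Z.of_nat i = s + Z.of_nat k * d)%Z /\ (s = 1 \/ s = -1)%Z.
Proof.
by case/cycle_adjP => [|[|[|]]] ij; [exists 1%Z, 0%Z | exists (-1)%Z, 0%Z
  | exists 1%Z, (-1)%Z | exists (-1)%Z, 1%Z]; lia.
Qed.

Lemma torus_adj_step m n (x y : 'I_m * 'I_n) : torus_adj m n x y ->
  exists s1 d1 s2 d2 h : Z,
    [/\ (Z.of_nat y.1 - Z.of_nat x.1 = s1 + Z.of_nat m * d1)%Z,
        (Z.of_nat y.2 - Z.of_nat x.2 = s2 + Z.of_nat n * d2)%Z,
        (-1 <= s1 <= 1)%Z, (-1 <= s2 <= 1)%Z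
      & (s1 + s2 = 2 * h + 1)%Z].
Proof.
case: x y => [a b] [c d] /orP[] /andP[/eqP /= <- /cycle_adj_step[s [w [step [] s_unit]]]]; subst s.
- by exists 0%Z, 0%Z, 1%Z, w, 0%Z; split; lia.
- by exists 0%Z, 0%Z, (-1)%Z, w, (-1)%Z; split; lia.
- by exists 1%Z, w, 0%Z, 0%Z, 0%Z; split; lia.
- by exists (-1)%Z, w, 0%Z, 0%Z, (-1)%Z; split; lia.
Qed.

Lemma torus_no_closed_walk5 m n (x0 x1 x2 x3 x4 : 'I_m * 'I_n) : 6 <= m -> 6 <= n ->
  torus_adj m n x0 x1 -> torus_adj m n x1 x2 -> torus_adj m n x2 x3 ->
  torus_adj m n x3 x4 -> ~~ torus_adj m n x4 x0.
Proof.
move=> m6 n6 /torus_adj_step[s1 [d1 [t1 [e1 [h1 [? ? ? ? ?]]]]]].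
move=> /torus_adj_step[s2 [d2 [t2 [e2 [h2 [? ? ? ? ?]]]]]].
move=> /torus_adj_step[s3 [d3 [t3 [e3 [h3 [? ? ? ? ?]]]]]].
move=> /torus_adj_step[s4 [d4 [t4 [e4 [h4 [? ? ? ? ?]]]]]].
apply/negP => /torus_adj_step[s5 [d5 [t5 [e5 [h5 [? ? ? ? ?]]]]]].
have wind1 : (d1 + d2 + d3 + d4 + d5 = 0)%Z.
  by apply: (@multiple_small_eq0 m _ (- (s1 + s2 + s3 + s4 + s5))); lia.
have wind2 : (e1 + e2 + e3 + e4 + e5 = 0)%Z.
  by apply: (@multiple_small_eq0 n _ (- (t1 + t2 + t3 + t4 + t5))); lia.
lia.
Qed.

Lemma torus_nbhd2_indep m n : 6 <= m -> 6 <= n ->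
  forall v, {in nbhd2 (torus_adj m n) v &, forall x y, ~~ torus_adj m n x y}.
Proof.
move=> m6 n6 v x y; rewrite !inE => /and3P[_ _ /existsP[w /andP[vw wx]]].
move=> /and3P[_ _ /existsP[u /andP[vu uy]]]; apply/negP => xy.
have yu : torus_adj m n y u by rewrite torus_adj_sym.
by move/negP: (torus_no_closed_walk5 m6 n6 vw wx xy yu); rewrite torus_adj_sym.
Qed.

Theorem lemma3 (m n : nat) (hm : 6 <= m) (hn : 6 <= n) :
  maxn (gamma2d_torus m.-1 n) (gamma2d_torus m n.-1) <= gamma2d_torus m n.
Proof.
rewrite geq_max; apply/andP; split.
- case: m hm => [|[|m]] // hm.
  exact: ddom_num_contraction (contraction_cart_l _ (cycle_contraction m))
    (torus_nbhd2_indep hm hn).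
- case: n hn => [|[|n]] // hn.
  exact: ddom_num_contraction (contraction_cart_r _ (cycle_contraction n))
    (torus_nbhd2_indep hm hn).
Qed.
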